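(* Let $P=\mathbb{Q}[x_1,\dots,x_n]$, let $\sigma$ and $\tau$ be two term orderings on $\mathbb{T}^n$, and let $I$ be a non-zero ideal in $P$. Let $p$ and $q$ be primes which are $\sigma$-good for $I$. If $O_\tau(I_{(q,\sigma)})\prec_\tau O_\tau(I_{(p,\sigma)})$, then $q$ is $\tau$-bad for $I$.
   Context: $\mathbb{T}^n$ is the monoid of power-products in $x_1,\dots,x_n$. For $f\in P$, $\operatorname{den}(f)$ is the positive lcm of the denominators of its coefficients; $\operatorname{den}(G)$ is the lcm of $\operatorname{den}(g)$, $g\in G$. For a term ordering $\rho$ with $G_\rho$ the reduced $\rho$-Gröbner basis of $I$, a prime $p$ is $\rho$-good for $I$ if $p\nmid\operatorname{den}(G_\rho)$ and $\rho$-bad otherwise. For $\sigma$-good $p$, $\pi_p$ is coefficientwise reduction modulo $p$ into $\mathbb{F}_p[x_1,\dots,x_n]$ and $I_{(p,\sigma)}$ is the ideal of $\mathbb{F}_p[x_1,\dots,x_n]$ generated by $\pi_p(G_\sigma)$. A tuple $(t_1,\dots,t_r)$ of distinct power-products is $\tau$-ordered if $t_1<_\tau\cdots<_\tau t_r$. For an ideal $J$ in a polynomial ring over a field, $O_\tau(J)$ is the $\tau$-ordered tuple of the leading terms of a minimal $\tau$-Gröbner basis of $J$. For $\tau$-ordered tuples $T=(t_1,\dots,t_r)$ and $T'=(t'_1,\dots,t'_{r'})$, $T'\prec_\tau T$ means either $T$ is a proper prefix of $T'$ (i.e. $r<r'$ and $t_i=t'_i$ for $i\le r$), or there is $k\le\min(r,r')$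 with $t_i=t'_i$ for $i<k$ and $t'_k<_\tau t_k$. *)

From HB Require Import structures.
From mathcomp Require Import all_boot all_order all_algebra.
From mathcomp Require Import mpoly.

Set Implicit Arguments.
Unset Strict Implicit.
Unset Printing Implicit Defensive.

Import Order.TTheory GRing.Theory Num.Theory.
Local Open Scope ring_scope.

Section Defs.
Variable n : nat.

(* A term ordering on the monoid T^n = 'X_{1..n} of power products:
   a total order, compatible with multiplication (= addition of exponents),
   with 1 (the zero multinomial) as least element. *)
Definition term_ordering (le : rel 'X_{1..n}) : Prop :=
  (forall m, le m m) /\
  [/\ (forall m1 m2, le m1 m2 -> le m2 m1 -> m1 = m2),
      (forall m1 m2 m3, le m1 m2 -> le m2 m3 -> le m1 m3),
      (forall m1 m2, le m1 m2 || le m2 m1),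
      (forall m1 m2 m3, le m1 m2 -> le (m1 + m3)%MM (m2 + m3)%MM) &
      (forall m, le 0%MM m)].

Definition tlt (le : rel 'X_{1..n}) (m1 m2 : 'X_{1..n}) : bool :=
  le m1 m2 && (m1 != m2).

Variable R : comRingType.

(* Leading term of f w.r.t. le: the le-maximum of the support of f
   (for f != 0 and le a term ordering). *)
Definition LT (le : rel 'X_{1..n}) (f : {mpoly R[n]}) : 'X_{1..n} :=
  foldr (fun m acc => if le acc m then m else acc) 0%MM (msupp f).

Definition LC (le : rel 'X_{1..n}) (f : {mpoly R[n]}) : R := f@_(LT le f).

Definition is_ideal (J : {mpoly R[n]} -> Prop) : Prop :=
  [/\ J 0,
      (forall f g, J f -> J g -> J (f + g)) &
      (forall h f, J f -> J (h * f))].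

Definition gen_ideal (S : seq {mpoly R[n]}) (f : {mpoly R[n]}) : Prop :=
  exists hs : seq {mpoly R[n]},
    size hs = size S /\ f = \sum_(i < size S) hs`_i * S`_i.

(* G is a le-Groebner basis of J: G is contained in J and the leading terms
   of G generate the leading term ideal of J. *)
Definition groebner (le : rel 'X_{1..n}) (J : {mpoly R[n]} -> Prop)
    (G : seq {mpoly R[n]}) : Prop :=
  (forall g, g \in G -> J g) /\
  (forall f, J f -> f != 0 ->
     exists2 g, g \in G & (g != 0) && (LT le g <= LT le f)%MM).

Definition minimal_groebner (le : rel 'X_{1..n}) (J : {mpoly R[n]} -> Prop)
    (G : seq {mpoly R[n]}) : Prop :=
  [/\ groebner le J G, uniq G,
      (forall g, g \in G -> LC le g = 1) &
      (forall g g', g \in G -> g' \in G -> g != g' ->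
          ~~ (LT le g' <= LT le g)%MM)].

Definition reduced_groebner (le : rel 'X_{1..n}) (J : {mpoly R[n]} -> Prop)
    (G : seq {mpoly R[n]}) : Prop :=
  [/\ groebner le J G, uniq G,
      (forall g, g \in G -> LC le g = 1) &
      (forall g g' m, g \in G -> g' \in G -> g != g' -> m \in msupp g ->
          ~~ (LT le g' <= m)%MM)].

Definition O_tuple (le : rel 'X_{1..n}) (J : {mpoly R[n]} -> Prop)
    (T : seq 'X_{1..n}) : Prop :=
  sorted (tlt le) T /\
  exists G, minimal_groebner le J G /\ perm_eq T (map (LT le) G).

End Defs.

Definition prec n (le : rel 'X_{1..n}) (T' T : seq 'X_{1..n}) : Prop :=
  (size T < size T' /\ T = take (size T) T')%N \/
  exists k, [/\ (k < size T)%N, (k < size T')%N,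
                take k T = take k T' & tlt le (nth 0%MM T' k) (nth 0%MM T k)].

Definition den n (f : {mpoly rat[n]}) : nat :=
  \big[lcmn/1%N]_(m <- msupp f) `|denq f@_m|%N.

Definition denG n (G : seq {mpoly rat[n]}) : nat :=
  \big[lcmn/1%N]_(g <- G) den g.

(* reduction modulo p of a rational number (meaningful when p does not
   divide its denominator) and of a polynomial, coefficientwise. *)
Definition rat_to_Fp (p : nat) (x : rat) : 'F_p :=
  (numq x)%:~R / (denq x)%:~R.

Definition pi_p (p : nat) n (f : {mpoly rat[n]}) : {mpoly 'F_p[n]} :=
  map_mpoly (rat_to_Fp p) f.

Definition I_mod (p : nat) n (Gs : seq {mpoly rat[n]}) : {mpoly 'F_p[n]} -> Prop :=
  gen_ideal (map (@pi_p p n) Gs).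

(* p is le-good / le-bad for I, where G is the reduced le-GB of I. *)
Definition good n (p : nat) (G : seq {mpoly rat[n]}) : Prop :=
  prime p /\ ~~ (p %| denG G)%N.
Definition bad n (p : nat) (G : seq {mpoly rat[n]}) : Prop :=
  prime p /\ (p %| denG G)%N.

Arguments rat_to_Fp p x : clear implicits.
Arguments pi_p p {n} f.
Arguments I_mod p {n} Gs _.

(* Suppose q were tau-good. Over the local ring Z_(q) both reduced bases have
   integral coefficients, and division by the monic basis G_tau shows that
   pi_q(G_tau) is a tau-Groebner basis of I_(q,sigma); so every element of
   O_tau(I_(q,sigma)) is the leading term of an element of G_tau. Let t be the
   term where O_tau(I_(q,sigma)) first departs from O_tau(I_(p,sigma)), and
   t = LT_tau(g) with g in G_tau. Rescale g so that its reduction modulo p is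
   defined and non-zero: it lies in I_(p,sigma), so its leading term s, a term
   of g with s <=_tau t, is divisible by some o in O_tau(I_(p,sigma)). Since no
   element of O_tau(I_(p,sigma)) divides t, we get o <_tau t, hence o is also in
   O_tau(I_(q,sigma)), i.e. o = LT_tau(g') for some g' in G_tau; as o <> t,
   g' <> g and LT_tau(g') divides the term s of g, contradicting reducedness. *)

From HB Require Import structures.
From mathcomp Require Import all_boot all_order all_algebra.
From mathcomp Require Import mpoly.
From mathcomp Require Import ring.
From Stdlib Require Import Classical ClassicalEpsilon.

Set Implicit Arguments.
Unset Strict Implicit.
Unset Printing Implicit Defensive.

Import Order.TTheory GRing.Theory Num.Theory.
Local Open Scope ring_scope.

Lemma msupp_zero n (R : comNzRingType) : msupp (0 : {mpoly R[n]}) = [::].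
Proof. by apply/eqP; rewrite msupp_eq0. Qed.

Section TermOrdering.
Variables (n : nat) (le : rel 'X_{1..n}).
Hypothesis Hle : term_ordering le.

Lemma tord_refl m : le m m.
Proof. by case: Hle. Qed.

Lemma tord_anti m1 m2 : le m1 m2 -> le m2 m1 -> m1 = m2.
Proof. by case: Hle => _ [+ _ _ _ _]; apply. Qed.

Lemma tord_trans m1 m2 m3 : le m1 m2 -> le m2 m3 -> le m1 m3.
Proof. by case: Hle => _ [_ + _ _ _]; apply. Qed.

Lemma tord_total m1 m2 : le m1 m2 || le m2 m1.
Proof. by case: Hle => _ [_ _ + _ _]; apply. Qed.

Lemma tord_addl m1 m2 m3 : le m1 m2 -> le (m3 + m1)%MM (m3 + m2)%MM.
Proof. by case: Hle => _ [_ _ _ /(_ m1 m2 m3) + _]; rewrite ![(m3 + _)%MM]addmC. Qed.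

Lemma tord0 m : le 0%MM m.
Proof. by case: Hle => _ []. Qed.

Lemma tord_lepm m1 m2 : (m1 <= m2)%MM -> le m1 m2.
Proof.
move=> m12; rewrite -(submK m12) -[X in le X](add0m m1) ![(_ + m1)%MM]addmC.
exact/tord_addl/tord0.
Qed.

Lemma tltNge m1 m2 : tlt le m1 m2 = ~~ le m2 m1.
Proof.
rewrite /tlt; have [le21|nle21] := boolP (le m2 m1).
  by apply/negP => /andP [/tord_anti/(_ le21) ->]; rewrite eqxx.
have := tord_total m1 m2; rewrite (negbTE nle21) orbF => -> /=.
by apply: contraNneq nle21 => ->; apply: tord_refl.
Qed.

Lemma tltW m1 m2 : tlt le m1 m2 -> le m1 m2.
Proof. by case/andP. Qed.

Lemma tltxx m : tlt le m m = false.
Proof. by rewrite /tlt eqxx andbF. Qed.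

Lemma tlt_le_trans m1 m2 m3 : tlt le m1 m2 -> le m2 m3 -> tlt le m1 m3.
Proof. by rewrite !tltNge => lt12 le23; apply: contraNN lt12; apply: tord_trans. Qed.

Lemma le_tlt_trans m1 m2 m3 : le m1 m2 -> tlt le m2 m3 -> tlt le m1 m3.
Proof. by rewrite !tltNge => le12; apply: contraNN => /tord_trans; apply. Qed.

Lemma tlt_trans : transitive (tlt le).
Proof. by move=> m2 m1 m3 lt12 /tltW; apply: tlt_le_trans. Qed.

Let tmax (s : seq 'X_{1..n}) := foldr (fun m acc => if le acc m then m else acc) 0%MM s.

Lemma tmax_ge s m : m \in s -> le m (tmax s).
Proof.
elim: s => //= m' s IHs; rewrite inE => /predU1P [->|/IHs le_m].
  by case: ifP => [_|/negbT]; [apply: tord_refl | rewrite -tltNge => /tltW].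
by case: ifP => // le_m'; apply: tord_trans le_m le_m'.
Qed.

Lemma tmax_mem s : tmax s \in 0%MM :: s.
Proof.
elim: s => [|m s IHs] /=; first by rewrite inE.
case: ifP => _; first by rewrite !inE eqxx orbT.
by move: IHs; rewrite !inE => /orP [->|->]; rewrite ?orbT.
Qed.

Variable R : comNzRingType.
Implicit Types f : {mpoly R[n]}.

Lemma LT_max f m : m \in msupp f -> le m (LT le f).
Proof. exact: tmax_ge. Qed.

Lemma LT_msupp f : f != 0 -> LT le f \in msupp f.
Proof.
move=> nz_f; have [m m_f] : exists m, m \in msupp f.
  by move: nz_f; rewrite -msupp_eq0; case: (msupp f) => // m s _; exists m; rewrite mem_head.
have := tmax_mem (msupp f); rewrite inE => /predU1P [LT0|//].
have := LT_max m_f; change (LT le f) with (tmax (msupp f)); rewrite LT0 => le_m0.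
by rewrite -(tord_anti le_m0 (tord0 m)).
Qed.

Lemma LT_unique f m :
  m \in msupp f -> (forall m', m' \in msupp f -> le m' m) -> LT le f = m.
Proof.
move=> m_f max_m; have nz_f : f != 0 by apply: contraTneq m_f => ->; rewrite msupp_zero.
by apply: tord_anti; [apply: max_m; apply: LT_msupp | apply: LT_max].
Qed.

End TermOrdering.

Lemma eq_LT n (le : rel 'X_{1..n}) (R S : comNzRingType)
    (f : {mpoly R[n]}) (g : {mpoly S[n]}) :
  term_ordering le -> msupp f =i msupp g -> LT le f = LT le g.
Proof.
move=> Hle; have [->|nz_f] := eqVneq f 0 => supp_fg.
  have [->|nz_g] := eqVneq g 0; first by rewrite /LT !msupp_zero.
  by have := LT_msupp Hle nz_g; rewrite -supp_fg msupp_zero.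
have nz_g : g != 0.
  by apply: contraTneq (LT_msupp Hle nz_f) => g0; rewrite supp_fg g0 msupp_zero.
by apply: (tord_anti Hle); apply: (LT_max Hle); [rewrite -supp_fg | rewrite supp_fg];
  apply: LT_msupp.
Qed.

Lemma LC_neq0 n (le : rel 'X_{1..n}) (R : comNzRingType) (f : {mpoly R[n]}) :
  LC le f = 1 -> f != 0.
Proof. by apply: contraPneq => ->; rewrite /LC mcoeff0 => /esym/eqP; rewrite oner_eq0. Qed.

Lemma tail_min (a : nat -> nat) N :
  exists j, (N < j)%N /\ forall j', (N < j')%N -> (a j <= a j')%N.
Proof.
apply: NNPP => no_min.
suff no_bound v j : (N < j)%N -> (a j <= v)%N -> False by exact: (no_bound _ N.+1).
elim: v j => [|v IHv] j Nj ajv; apply: no_min; exists j; split=> // j' Nj'.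
  by move: ajv; rewrite leqn0 => /eqP ->.
rewrite leqNgt; apply/negP => lt_j'j.
by apply: (IHv j' Nj'); rewrite -ltnS; apply: leq_trans lt_j'j ajv.
Qed.

Lemma nondecreasing_subseq (a : nat -> nat) :
  exists phi : nat -> nat,
    (forall k, phi k < phi k.+1)%N /\ (forall k, a (phi k) <= a (phi k.+1))%N.
Proof.
have [next nextP] : exists next : nat -> nat, forall N,
    (N < next N)%N /\ forall j, (N < j)%N -> (a (next N) <= a j)%N.
  exact: choice (tail_min a).
exists (fun k => iter k.+1 next 0%N); split=> k; first by case: (nextP (iter k.+1 next 0%N)).
have [lt_k min_k] := nextP (iter k next 0%N).
by apply: min_k; apply: ltn_trans lt_k _; case: (nextP (iter k.+1 next 0%N)).
Qed.

Section Dickson.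
Variable n : nat.

Lemma dickson_prefix (s : nat -> 'X_{1..n}) k : (k <= n)%N ->
  exists phi : nat -> nat, (forall j, phi j < phi j.+1)%N /\
    forall i : 'I_n, (i < k)%N -> forall j, (s (phi j) i <= s (phi j.+1) i)%N.
Proof.
elim: k => [|k IHk] lt_kn; first by exists id.
have [phi [phi_lt phi_mono]] := IHk (ltnW lt_kn).
have [psi [psi_lt psi_mono]] := nondecreasing_subseq (fun j => s (phi j) (Ordinal lt_kn)).
have phi_inc : {homo phi : j j' / (j < j')%N} by apply: homo_ltn => //; apply: ltn_trans.
exists (phi \o psi); split=> [j|i]; first exact: phi_inc.
rewrite ltnS leq_eqVlt => /predU1P [i_k|lt_ik] j.
  by rewrite (_ : i = Ordinal lt_kn); [apply: psi_mono | apply: val_inj].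
suff s_i_mono : {homo (fun j => s (phi j) i) : j j' / (j <= j')%N >-> (j <= j')%N}.
  exact/s_i_mono/ltnW.
by apply: homo_leq => //; [apply: leq_trans | move=> j'; apply: phi_mono].
Qed.

Lemma dickson (s : nat -> 'X_{1..n}) : exists i j, (i < j)%N /\ (s i <= s j)%MM.
Proof.
have [phi [phi_lt phi_mono]] := dickson_prefix s (leqnn n).
by exists (phi 0%N), (phi 1%N); split=> //; apply/mnm_lepP => i; apply: phi_mono.
Qed.

Variable le : rel 'X_{1..n}.
Hypothesis Hle : term_ordering le.

Lemma tord_wf : well_founded (tlt le).
Proof.
move=> m0; apply: NNPP => not_acc0.
have step m : exists m', ~ Acc (tlt le) m -> tlt le m' m /\ ~ Acc (tlt le) m'.
  have [acc|not_acc] := classic (Acc (tlt le) m); first by exists m.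
  apply: NNPP => none; apply: not_acc; constructor => m' lt_m'm.
  by apply: NNPP => not_acc'; apply: none; exists m'.
have [next nextP] := choice _ step.
pose s k := iter k next m0.
have not_acc k : ~ Acc (tlt le) (s k) by elim: k => //= k IHk; case: (nextP _ IHk).
have s_step k : tlt le (s k.+1) (s k) by case: (nextP _ (not_acc k)).
have s_desc i j : (i < j)%N -> tlt le (s j) (s i).
  elim: j => // j IHj; rewrite ltnS leq_eqVlt => /predU1P [-> //| /IHj lt_ji].
  exact: tlt_trans (s_step j) lt_ji.
have [i [j [lt_ij le_ij]]] := dickson s.
by have := s_desc _ _ lt_ij; rewrite (tltNge Hle) (tord_lepm Hle le_ij).
Qed.

End Dickson.

Section Ideals.
Variables (n : nat) (R : comNzRingType).
Implicit Types (S : seq {mpoly R[n]}) (J : {mpoly R[n]} -> Prop) (f g : {mpoly R[n]}).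

Lemma gen_ideal_is_ideal S : is_ideal (gen_ideal S).
Proof.
split.
- exists (nseq (size S) 0); rewrite size_nseq; split=> //.
  by rewrite big1 // => i _; rewrite nth_nseq if_same mul0r.
- move=> _ _ [hs [size_hs ->]] [ks [size_ks ->]].
  exists [seq hs`_i + ks`_i | i <- iota 0 (size S)]; rewrite size_map size_iota.
  split=> //; rewrite -big_split; apply: eq_bigr => i _ /=.
  by rewrite (nth_map 0%N) ?size_iota // nth_iota // mulrDl.
- move=> h _ [hs [size_hs ->]]; exists [seq h * k | k <- hs]; rewrite size_map.
  split=> //; rewrite mulr_sumr; apply: eq_bigr => i _.
  by rewrite (nth_map 0) ?size_hs // mulrA.
Qed.

Lemma gen_ideal0 S : gen_ideal S 0.
Proof. by case: (gen_ideal_is_ideal S). Qed.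

Lemma gen_ideal_mem S g : g \in S -> gen_ideal S g.
Proof.
move=> g_S; have lt_gS : (index g S < size S)%N by rewrite index_mem.
exists [seq (i == index g S)%:R | i <- iota 0 (size S)]; rewrite size_map size_iota.
split=> //; rewrite (bigD1 (Ordinal lt_gS)) //= big1 => [|i /eqP ne_i].
  by rewrite (nth_map 0%N) ?size_iota // nth_iota // eqxx mul1r nth_index // addr0.
rewrite (nth_map 0%N) ?size_iota // nth_iota // add0n.
by case: eqP => [eq_i|_]; [case: ne_i; apply: val_inj | rewrite mul0r].
Qed.

Lemma gen_ideal_sub J S f :
  is_ideal J -> (forall g, g \in S -> J g) -> gen_ideal S f -> J f.
Proof.
case=> J0 JD JM S_J [hs [_ ->]]; apply: (big_ind J) => // i _.
by apply/JM/S_J/mem_nth.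
Qed.

Lemma idealB J f g : is_ideal J -> J f -> J g -> J (f - g).
Proof. by case=> _ JD JM Jf Jg; rewrite -mulN1r; apply/JD/JM. Qed.

End Ideals.

Lemma gen_ideal_map n (R S : comNzRingType) (phi : {rmorphism R -> S})
    (G : seq {mpoly R[n]}) f :
  gen_ideal G f -> gen_ideal (map (map_mpoly phi) G) (map_mpoly phi f).
Proof.
case=> hs [size_hs ->]; exists (map (map_mpoly phi) hs); rewrite !size_map.
split=> //; rewrite rmorph_sum; apply: eq_bigr => i _.
by rewrite rmorphM !(nth_map 0) ?size_hs.
Qed.

Section Division.
Variables (n : nat) (le : rel 'X_{1..n}) (R : comNzRingType).
Hypothesis Hle : term_ordering le.
Implicit Types (G : seq {mpoly R[n]}) (f g h r : {mpoly R[n]}).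

Definition reduced_wrt G r :=
  forall m, m \in msupp r -> forall g, g \in G -> ~~ (LT le g <= m)%MM.

Lemma groebner_reduced_eq0 J G r :
  groebner le J G -> J r -> reduced_wrt G r -> r = 0.
Proof.
case=> _ G_LT Jr red_r; apply/eqP/contraT => nz_r.
have [g g_G /andP [_ g_r]] := G_LT r Jr nz_r.
by have := red_r _ (LT_msupp Hle nz_r) g g_G; rewrite g_r.
Qed.

Lemma top_reducer G w : (forall g, g \in G -> LC le g = 1) ->
  exists2 h, h@_w = 1 /\ (forall m, m \in msupp h -> le m w) &
    gen_ideal G h \/ h = 'X_[w] /\ forall g, g \in G -> ~~ (LT le g <= w)%MM.
Proof.
move=> G_monic.
have [/hasP [g g_G g_w]|/hasPn no_g] := boolP (has (fun g => LT le g <= w)%MM G).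
  exists ('X_[w - LT le g] * g); last by left; case: (gen_ideal_is_ideal G) => _ _ JM;
    apply/JM/gen_ideal_mem.
  split=> [|m]; first by rewrite mulrC -[w in _@_w](submK g_w) mcoeffMX; apply: G_monic.
  rewrite mulrC (perm_mem (msuppMX _ _)) => /mapP [m' m'_g ->].
  by rewrite -[w in le _ w](submK g_w); apply/tord_addl/LT_max.
exists 'X_[w]; last by right.
by rewrite mcoeffX eqxx; split=> // m; rewrite msuppX inE => /eqP ->; apply: tord_refl.
Qed.

Lemma cancel_term f h w :
    (forall m, m \in msupp f -> le m w) -> (forall m, m \in msupp h -> le m w) ->
    h@_w = 1 ->
  (forall m, m \in msupp (f - f@_w *: h) -> le m w) /\ w \notin msupp (f - f@_w *: h).
Proof.
move=> le_f le_h h_w; split=> [m /msuppB_le|].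
  by rewrite mem_cat => /orP [/le_f | /msuppZ_le /le_h].
by rewrite mcoeff_msupp mcoeffB mcoeffZ h_w mulr1 subrr eqxx.
Qed.

Lemma division_bounded G w f : (forall g, g \in G -> LC le g = 1) ->
    (forall m, m \in msupp f -> le m w) ->
  exists r, [/\ gen_ideal G (f - r), reduced_wrt G r & forall m, m \in msupp r -> le m w].
Proof.
move=> G_monic; elim/(well_founded_ind (tord_wf Hle)): w f => w IHw f le_f.
have [h [h_w le_h] h_G] := top_reducer w G_monic.
have [le_f' w_f'] := cancel_term le_f le_h h_w.
have [r [Ir red_r le_r]] : exists r, [/\ gen_ideal G (f - f@_w *: h - r),
    reduced_wrt G r & forall m, m \in msupp r -> le m w].
  move: (f - f@_w *: h) le_f' w_f' => f' le_f' w_f'.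
  have [->|nz_f'] := eqVneq f' 0.
    by exists 0; split=> [|m|m]; rewrite ?msupp_zero // subr0; apply: gen_ideal0.
  have lt_f' : tlt le (LT le f') w.
    by rewrite /tlt le_f' ?LT_msupp //; apply: contraNneq w_f' => <-; apply: LT_msupp.
  have [r [Ir red_r le_r]] := IHw _ lt_f' f' (LT_max Hle (f:=f')).
  by exists r; split=> // m /le_r le_m; apply: tord_trans le_m (tltW lt_f').
case: h_G => [I_h | [hX no_g]].
  exists r; split=> //; rewrite -[f](subrK (f@_w *: h)) addrAC.
  case: (gen_ideal_is_ideal G) => _ JD JM; apply: JD Ir _.
  by rewrite -mul_mpolyC; apply: JM.
have supp_r' : {subset msupp (r + f@_w *: 'X_[w]) <= w :: msupp r}.
  move=> m /msuppD_le; rewrite mem_cat inE => /orP [-> | /msuppZ_le]; first by rewrite orbT.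
  by rewrite msuppX inE => ->.
exists (r + f@_w *: 'X_[w]); split.
- by rewrite opprD addrA addrAC -hX.
- by move=> m /supp_r'; rewrite inE => /predU1P [-> | /red_r].
- by move=> m /supp_r'; rewrite inE => /predU1P [-> | /le_r]; rewrite ?tord_refl.
Qed.

Lemma division G f : (forall g, g \in G -> LC le g = 1) ->
  exists r, [/\ gen_ideal G (f - r), reduced_wrt G r &
    forall m, m \in msupp r -> exists2 m', m' \in msupp f & le m m'].
Proof.
move=> G_monic; have [->|nz_f] := eqVneq f 0.
  by exists 0; split=> [|m|m]; rewrite ?msupp_zero // subr0; apply: gen_ideal0.
have [r [Ir red_r le_r]] := division_bounded G_monic (LT_max Hle (f:=f)).
by exists r; split=> // m /le_r; exists (LT le f); rewrite ?LT_msupp.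
Qed.

End Division.

Lemma frac_sub (F : fieldType) (a b c d : int) : b%:~R != 0 :> F -> d%:~R != 0 :> F ->
  a%:~R / b%:~R - c%:~R / d%:~R = (a * d - c * b)%:~R / (b * d)%:~R :> F.
Proof. by move=> b0 d0; rewrite intrB !intrM; field; rewrite b0 d0. Qed.

Lemma frac_mul (F : fieldType) (a b c d : int) : b%:~R != 0 :> F -> d%:~R != 0 :> F ->
  a%:~R / b%:~R * (c%:~R / d%:~R) = (a * c)%:~R / (b * d)%:~R :> F.
Proof. by move=> b0 d0; rewrite !intrM; field; rewrite b0 d0. Qed.

Lemma numq_frac (a b : int) : b != 0 ->
  numq (a%:~R / b%:~R : rat) * b = a * denq (a%:~R / b%:~R : rat).
Proof.
move=> b0; apply: (@intr_inj rat); rewrite !intrM numqE.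
by field; rewrite intr_eq0.
Qed.

Lemma denq_frac (a b : int) : b != 0 -> (denq (a%:~R / b%:~R : rat) %| b)%Z.
Proof.
move=> b0; have /Gauss_dvdzr <- : coprimez (denq (a%:~R / b%:~R : rat)) (numq (a%:~R / b%:~R)).
  by rewrite /coprimez gcdzC; apply: coprime_num_den.
by rewrite numq_frac // dvdz_mull.
Qed.

Lemma rat_to_Fp1 p : rat_to_Fp p 1 = 1.
Proof. by rewrite /rat_to_Fp (_ : numq 1 = 1) // (_ : denq 1 = 1) // divr1. Qed.

Section LocalRing.
Variable p : nat.

Definition pint : {pred rat} := fun x => coprime p `|denq x|.

Lemma pint_frac (a b : int) : b != 0 -> coprime p `|b| -> a%:~R / b%:~R \in pint.
Proof. by move=> b0; apply: coprime_dvdr; rewrite -dvdzE denq_frac. Qed.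

Lemma pint_int (z : int) : z%:~R \in pint.
Proof. by rewrite unfold_in /pint /= denq_int coprimen1. Qed.

Lemma pintP x :
  x \in pint -> exists a b, [/\ b != 0, coprime p `|b| & x = a%:~R / b%:~R :> rat].
Proof. by exists (numq x), (denq x); rewrite denq_neq0 divq_num_den. Qed.

Lemma pint_subring_closed : subring_closed pint.
Proof.
have rat_int0 (z : int) : z != 0 -> z%:~R != 0 :> rat by rewrite intr_eq0.
split; first exact: (pint_int 1).
all: move=> _ _ /pintP [a [b [b0 cop_b ->]]] /pintP [c [d [d0 cop_d ->]]].
all: rewrite ?frac_sub ?frac_mul ?rat_int0 //.
all: by apply: pint_frac; rewrite ?mulf_neq0 // abszM coprimeMr cop_b cop_d.
Qed.

HB.instance Definition _ := GRing.isSubringClosed.Build rat pint pint_subring_closed.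

Record Zloc := MkZloc { zval :> rat; zvalP : zval \in pint }.
HB.instance Definition _ := [isSub for zval].
HB.instance Definition _ := [Choice of Zloc by <:].
HB.instance Definition _ := [SubChoice_isSubComNzRing of Zloc by <:].

(* The primality proof is an argument of [phiZ] only so that the morphism
   instances declared below can depend on it. *)
Definition phiZ of prime p := fun x : Zloc => rat_to_Fp p (val x).

Definition divp (x : Zloc) : Zloc := insubd 0 (val x / p%:R).

Hypothesis pr : prime p.

Lemma Fp_int_eq0 (z : int) : (z%:~R == 0 :> 'F_p) = (p %| `|z|)%N.
Proof.
have Fp_nat_eq0 k : (k%:R == 0 :> 'F_p) = (p %| k)%N.
  by rewrite -[0]/(0%:R) -val_eqE /= !val_Fp_nat // mod0n.
by case: z => k; rewrite ?NegzE ?mulrNz ?oppr_eq0 -pmulrn Fp_nat_eq0.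
Qed.

Lemma rat_to_Fp_frac (a b : int) : b != 0 -> coprime p `|b| ->
  rat_to_Fp p (a%:~R / b%:~R) = a%:~R / b%:~R.
Proof.
move=> b0 cop_b; have cop_den := pint_frac a b0 cop_b.
by apply/eqP; rewrite eqr_div ?Fp_int_eq0 -?prime_coprime // -!intrM numq_frac.
Qed.

Lemma rat_to_Fp_int (z : int) : rat_to_Fp p z%:~R = z%:~R.
Proof. by have := @rat_to_Fp_frac z 1; rewrite !divr1; apply; rewrite ?coprimen1. Qed.

Lemma phiZ_is_zmod_morphism : GRing.zmod_morphism (phiZ pr).
Proof.
move=> x y; rewrite /phiZ rmorphB /=.
have [a [b [b0 cop_b ->]]] := pintP (valP x).
have [c [d [d0 cop_d ->]]] := pintP (valP y).
rewrite frac_sub ?intr_eq0 // !rat_to_Fp_frac ?frac_sub ?Fp_int_eq0 -?prime_coprime //.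
all: by rewrite ?mulf_neq0 // (abszM b d) coprimeMr cop_b cop_d.
Qed.

Lemma phiZ_is_monoid_morphism : GRing.monoid_morphism (phiZ pr).
Proof.
split=> [|x y]; first by rewrite /phiZ rmorph1 /= rat_to_Fp1.
rewrite /phiZ rmorphM /=.
have [a [b [b0 cop_b ->]]] := pintP (valP x).
have [c [d [d0 cop_d ->]]] := pintP (valP y).
rewrite frac_mul ?intr_eq0 // !rat_to_Fp_frac ?frac_mul ?Fp_int_eq0 -?prime_coprime //.
all: by rewrite ?mulf_neq0 // (abszM b d) coprimeMr cop_b cop_d.
Qed.

HB.instance Definition _ :=
  GRing.isZmodMorphism.Build Zloc 'F_p (phiZ pr) phiZ_is_zmod_morphism.
HB.instance Definition _ :=
  GRing.isMonoidMorphism.Build Zloc 'F_p (phiZ pr) phiZ_is_monoid_morphism.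

Lemma phiZ_natr (y : 'F_p) : phiZ pr (val y)%:R = y.
Proof.
rewrite rmorph_nat; apply: val_inj; rewrite /= val_Fp_nat // modn_small //.
by rewrite -[X in (_ < X)%N]Fp_cast.
Qed.

Lemma divpK x : phiZ pr x = 0 -> p%:R * divp x = x.
Proof.
have [a [b [b0 cop_b xE]]] := pintP (valP x).
have p0 : p%:R != 0 :> rat by rewrite pnatr_eq0 -lt0n prime_gt0.
rewrite /phiZ /= xE rat_to_Fp_frac // => /eqP; rewrite mulf_eq0 invr_eq0 !Fp_int_eq0.
rewrite (negbTE (_ : ~~ (p %| `|b|)%N)) -?prime_coprime // orbF => p_a.
have /dvdzP [a' aE] : (p%:Z %| a)%Z by rewrite dvdzE.
have x_div : val x / p%:R = a'%:~R / b%:~R.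
  by rewrite xE aE intrM -pmulrn; field; rewrite p0 intr_eq0 b0.
apply: val_inj; rewrite rmorphM rmorph_nat /= /divp insubdK; last by rewrite x_div pint_frac.
by rewrite mulrC divfK.
Qed.

End LocalRing.

Lemma mcoeff_sum_mX n (R : nzRingType) (s : seq 'X_{1..n}) (c : 'X_{1..n} -> R) k :
  uniq s -> (\sum_(m <- s) c m *: 'X_[m])@_k = if k \in s then c k else 0.
Proof.
move=> uniq_s; rewrite raddf_sum /=.
under eq_bigr => m _ do rewrite mcoeffZ mcoeffX.
case: ifP => [k_s | /negbT k_s].
  rewrite (bigD1_seq k) //= eqxx mulr1 big1 ?addr0 // => m.
  by move/negbTE ->; rewrite mulr0.
rewrite big_seq big1 // => m m_s; case: eqP => [mk|]; last by rewrite mulr0.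
by rewrite -mk m_s in k_s.
Qed.

Lemma mcoeff_map_mpoly0 n (R S : nzRingType) (f : R -> S) (F : {mpoly R[n]}) m :
  f 0 = 0 -> (map_mpoly f F)@_m = f F@_m.
Proof.
move=> f0; rewrite /map_mpoly /mmap.
under eq_bigr => m' _ do rewrite mmap1_id /= mul_mpolyC.
by rewrite mcoeff_sum_mX ?msupp_uniq //; case: ifP => // /negbT/memN_msupp_eq0 ->.
Qed.

Lemma mcoeff_pi p n (f : {mpoly rat[n]}) m : (pi_p p f)@_m = rat_to_Fp p f@_m.
Proof. by apply: mcoeff_map_mpoly0; rewrite /rat_to_Fp mul0r. Qed.

Lemma msupp_pi p n (f : {mpoly rat[n]}) : {subset msupp (pi_p p f) <= msupp f}.
Proof.
move=> m; rewrite !mcoeff_msupp mcoeff_pi; apply: contraNN => /eqP ->.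
by rewrite /rat_to_Fp mul0r.
Qed.

Lemma pi_LT n (le : rel 'X_{1..n}) p (g : {mpoly rat[n]}) :
  term_ordering le -> LC le g = 1 -> pi_p p g != 0 /\ LT le (pi_p p g) = LT le g.
Proof.
move=> Hle LC_g; have LT_g : LT le g \in msupp (pi_p p g).
  by rewrite mcoeff_msupp mcoeff_pi (_ : g@_(LT le g) = 1) // rat_to_Fp1 oner_eq0.
split; first by apply: contraTneq LT_g => ->; rewrite msupp_zero.
by apply: (LT_unique Hle LT_g) => m /msupp_pi; apply: LT_max.
Qed.

Lemma seq_preimage (A B : eqType) (f : A -> B) (s : seq B) :
  (forall b, b \in s -> exists a, f a = b) -> exists s', map f s' = s.
Proof.
elim: s => [|b s IHs] s_f; first by exists [::].
have [a <-] := s_f b (mem_head _ _).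
have [s' <-] : exists s', map f s' = s by apply: IHs => b' b's; apply/s_f/mem_behead.
by exists (a :: s').
Qed.

Lemma pint_good n p (G : seq {mpoly rat[n]}) :
  good p G -> forall g m, g \in G -> g@_m \in pint p.
Proof.
case=> p_pr p_good g m g_G; rewrite unfold_in /pint /= prime_coprime //.
have [m_g|/memN_msupp_eq0 ->] := boolP (m \in msupp g).
  apply: contra p_good => /dvdn_trans; apply; apply: (@dvdn_trans (den g)).
    by rewrite /den (big_rem m) //= dvdn_lcml.
  by rewrite /denG (big_rem g) //= dvdn_lcml.
by rewrite (denq_int 0) dvdn1 neq_ltn prime_gt1 ?orbT.
Qed.

Local Notation toQ := (map_mpoly (val : Zloc _ -> rat)).
Local Notation modp pr := (map_mpoly (phiZ pr)).

Section IntegralLift.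
Variables (n p : nat).
Hypothesis pr : prime p.
Implicit Types (F K : {mpoly (Zloc p)[n]}).

Lemma msupp_toQ F : msupp (toQ F) =i msupp F.
Proof. by apply/perm_mem/msupp_map_mpoly/val_inj. Qed.

Lemma toQ_eq0 F : (toQ F == 0) = (F == 0).
Proof.
apply/eqP/eqP => [F0|->]; last exact: raddf0.
by apply/mpolyP => m; apply: val_inj; rewrite -mcoeff_map_mpoly F0 !mcoeff0.
Qed.

Lemma LT_toQ le F : term_ordering le -> LT le (toQ F) = LT le F.
Proof. by move=> Hle; apply/eq_LT/msupp_toQ. Qed.

Lemma pi_toQ F : pi_p p (toQ F) = modp pr F.
Proof. by apply/mpolyP => m; rewrite mcoeff_pi !mcoeff_map_mpoly. Qed.

Lemma map_pi_toQ (G : seq {mpoly (Zloc p)[n]}) :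
  map (pi_p p) (map toQ G) = map (modp pr) G.
Proof. by rewrite -map_comp; apply: eq_map => F; apply: pi_toQ. Qed.

Lemma toQ_lift (f : {mpoly rat[n]}) : (forall m, f@_m \in pint p) ->
  exists F, toQ F = f.
Proof.
move=> f_pint; exists (map_mpoly (insubd (0 : Zloc p)) f); apply/mpolyP => m.
have insubd0 : insubd (0 : Zloc p) 0 = 0 by apply: val_inj; rewrite insubdK ?rpred0.
by rewrite mcoeff_map_mpoly mcoeff_map_mpoly0 //= insubdK.
Qed.

Lemma toQ_lift_seq (G : seq {mpoly rat[n]}) :
  (forall g m, g \in G -> g@_m \in pint p) ->
  exists G' : seq {mpoly (Zloc p)[n]}, map toQ G' = G.
Proof.
by move=> G_pint; apply: seq_preimage => g g_G; apply: toQ_lift => m; apply: G_pint.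
Qed.

Lemma modp_lift (k : {mpoly 'F_p[n]}) : exists K, modp pr K = k.
Proof.
exists (map_mpoly (fun y : 'F_p => (val y)%:R : Zloc p) k); apply/mpolyP => m.
by rewrite mcoeff_map_mpoly mcoeff_map_mpoly0 //= phiZ_natr.
Qed.

Lemma gen_ideal_modp_lift (G : seq {mpoly (Zloc p)[n]}) h :
  gen_ideal (map (modp pr) G) h -> exists2 F, gen_ideal G F & modp pr F = h.
Proof.
case=> hs [size_hs ->]; have [ks ks_hs] := @seq_preimage _ _ _ hs (fun k _ => modp_lift k).
have size_ks : size ks = size G by rewrite -(size_map (modp pr)) ks_hs size_hs size_map.
exists (\sum_(i < size G) ks`_i * G`_i); first by exists ks.
rewrite rmorph_sum size_map; apply: eq_bigr => i _.
by rewrite rmorphM -ks_hs !(nth_map 0) ?size_ks.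
Qed.

End IntegralLift.

Lemma modp_split n p (pr : prime p) (le : rel 'X_{1..n}) (F : {mpoly (Zloc p)[n]}) u :
    term_ordering le -> (forall m, m \in msupp (modp pr F) -> le m u) ->
  exists E L, F = p%:R *: E + F@_u *: 'X_[u] + L /\
              forall m, m \in msupp L -> tlt le m u.
Proof.
move=> Hle le_u.
have coef P (c : 'X_{1..n} -> Zloc p) k :
    (\sum_(m <- msupp F | P m) c m *: 'X_[m])@_k = if P k && (k \in msupp F) then c k else 0.
  by rewrite -big_filter mcoeff_sum_mX ?filter_uniq ?msupp_uniq // mem_filter.
exists (\sum_(m <- msupp F | tlt le u m) divp (F@_m) *: 'X_[m]).
exists (\sum_(m <- msupp F | tlt le m u) F@_m *: 'X_[m]); split=> [|m].
  apply/mpolyP => k; rewrite !mcoeffD mcoeffZ !coef mcoeffZ mcoeffX.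
  have [<-|ne_uk] := eqVneq u k; first by rewrite !tltxx mulr0 mulr1 add0r addr0.
  rewrite mulr0 addr0; have [lt_uk|] := boolP (tlt le u k).
    rewrite (tltNge Hle k) (tltW lt_uk) addr0.
    have [k_F|/memN_msupp_eq0 ->] := boolP (k \in msupp F); last by rewrite mulr0.
    rewrite divpK // -mcoeff_map_mpoly; apply: memN_msupp_eq0.
    by apply: contraL lt_uk => /le_u le_ku; rewrite (tltNge Hle) le_ku.
  rewrite (tltNge Hle) negbK => le_ku; rewrite /tlt le_ku eq_sym ne_uk mulr0 add0r.
  by have [//|/memN_msupp_eq0 ->] := boolP (k \in msupp F).
by rewrite mcoeff_msupp coef; case: ifP => [/andP []|]; rewrite ?eqxx.
Qed.

Lemma toQ_lift_monic n p (le : rel 'X_{1..n}) (G : seq {mpoly rat[n]}) :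
    term_ordering le -> (forall g, g \in G -> LC le g = 1) ->
    (forall g m, g \in G -> g@_m \in pint p) ->
  exists2 G' : seq {mpoly (Zloc p)[n]}, map toQ G' = G &
    forall g', g' \in G' -> LC le g' = 1.
Proof.
move=> Hle G_monic G_pint.
have [G' G'G] := toQ_lift_seq G_pint.
exists G' => // g' g'_G'; apply: val_inj.
rewrite rmorph1 /LC -(LT_toQ g' Hle) -mcoeff_map_mpoly.
by apply: G_monic; rewrite -G'G; apply: map_f.
Qed.

Section Reduction.
Variables (n p : nat) (le : rel 'X_{1..n}) (I : {mpoly rat[n]} -> Prop).
Variables (G : seq {mpoly rat[n]}) (G' : seq {mpoly (Zloc p)[n]}).
Hypotheses (Hle : term_ordering le) (HI : is_ideal I) (G'G : map toQ G' = G).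

Lemma toQ_gen_ideal F : (forall g, g \in G -> I g) -> gen_ideal G' F -> I (toQ F).
Proof. by move=> G_I /(gen_ideal_map val); rewrite G'G; apply: (gen_ideal_sub HI G_I). Qed.

Hypothesis HG : groebner le I G.

Lemma toQ_reduced_eq0 F : I (toQ F) -> reduced_wrt le G' F -> F = 0.
Proof.
move=> I_F red_F; apply/eqP; rewrite -toQ_eq0; apply/eqP.
apply: (groebner_reduced_eq0 Hle HG I_F) => m; rewrite msupp_toQ => m_F g.
by rewrite -G'G => /mapP [g' g'_G' ->]; rewrite (LT_toQ g' Hle); apply: red_F.
Qed.

Lemma gen_ideal_toQ F :
  (forall g', g' \in G' -> LC le g' = 1) -> I (toQ F) -> gen_ideal G' F.
Proof.
move=> G'_monic I_F; have [r [Ir red_r _]] := division Hle F G'_monic.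
suff r0 : r = 0 by rewrite r0 subr0 in Ir.
apply: toQ_reduced_eq0 red_r.
have -> : r = F - (F - r) by rewrite opprB addrC subrK.
by rewrite rmorphB; apply: idealB I_F (toQ_gen_ideal _ Ir); case: HG.
Qed.

End Reduction.

Lemma pi_gen_ideal n p (le : rel 'X_{1..n}) (I : {mpoly rat[n]} -> Prop)
    (G : seq {mpoly rat[n]}) f :
    prime p -> term_ordering le -> is_ideal I -> groebner le I G ->
    (forall g, g \in G -> LC le g = 1) -> (forall g m, g \in G -> g@_m \in pint p) ->
  I f -> (forall m, f@_m \in pint p) -> gen_ideal (map (pi_p p) G) (pi_p p f).
Proof.
move=> pr Hle HI HG G_monic G_pint I_f f_pint.
have [G' G'G G'_monic] := toQ_lift_monic Hle G_monic G_pint.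
have [F FE] := toQ_lift f_pint.
rewrite -FE -G'G (pi_toQ pr) (map_pi_toQ pr).
by apply/gen_ideal_map/(gen_ideal_toQ Hle HI G'G HG G'_monic); rewrite FE.
Qed.

Section ModularLeadingTerms.
Variables (n q : nat) (tau : rel 'X_{1..n}) (I : {mpoly rat[n]} -> Prop).
Variables (Gs Gt : seq {mpoly rat[n]}).
Hypotheses (q_pr : prime q) (Ht : term_ordering tau) (HI : is_ideal I).
Hypotheses (Gs_I : forall g, g \in Gs -> I g) (Gs_pint : forall g m, g \in Gs -> g@_m \in pint q).
Hypotheses (HGt : groebner tau I Gt) (Gt_monic : forall g, g \in Gt -> LC tau g = 1).
Hypothesis Gt_pint : forall g m, g \in Gt -> g@_m \in pint q.

(* Lift h to F over Z_(q) and let u := LT h. The terms of F above u vanish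
   modulo q, so F = q E + F_u X^u + L with L below u. If no leading term of Gt
   divided u, reducing E and L by Gt would give an element q rE + F_u X^u + rL
   of I reduced with respect to Gt, hence zero; then F_u is divisible by q and
   h_u = 0. *)
Lemma LT_gen_ideal_pi h : gen_ideal (map (pi_p q) Gs) h -> h != 0 ->
  exists2 g, g \in Gt & (LT tau g <= LT tau h)%MM.
Proof.
move=> Ih nz_h; set u := LT tau h.
have [/hasP //|no_g] := boolP (has (fun g => LT tau g <= u)%MM Gt).
have [Gs' Gs'Gs] := toQ_lift_seq Gs_pint.
have [Gt' Gt'Gt Gt'_monic] := toQ_lift_monic Ht Gt_monic Gt_pint.
have [F IF FE] : exists2 F, gen_ideal Gs' F & modp q_pr F = h.
  by apply: gen_ideal_modp_lift; rewrite -(map_pi_toQ q_pr) Gs'Gs.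
have le_u m : m \in msupp (modp q_pr F) -> tau m u by rewrite FE; apply: LT_max.
have [E [L [FEL lt_L]]] := modp_split Ht le_u.
have [rE [IE red_E _]] := division Ht E Gt'_monic.
have [rL [IL red_L bnd_L]] := division Ht L Gt'_monic.
pose R := q%:R *: rE + F@_u *: 'X_[u] + rL.
have IR : gen_ideal Gt' (F - R).
  have -> : F - R = (q%:R *: 1) * (E - rE) + (L - rL).
    by rewrite {1}FEL /R -scalerAl mul1r scalerBr; ring.
  by case: (gen_ideal_is_ideal Gt') => _ JD JM; apply: JD (JM _ _ IE) IL.
have R0 : R = 0.
  apply: (toQ_reduced_eq0 Ht Gt'Gt HGt).
    have Gt_I : forall g, g \in Gt -> I g by case: HGt.
    have := idealB HI (toQ_gen_ideal HI Gs'Gs Gs_I IF) (toQ_gen_ideal HI Gt'Gt Gt_I IR).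
    by rewrite -rmorphB opprB addrC subrK.
  move=> m /msuppD_le; rewrite mem_cat => /orP [/msuppD_le | /red_L //].
  rewrite mem_cat => /orP [/msuppZ_le /red_E // | /msuppZ_le].
  rewrite msuppX inE => /eqP -> g' g'_Gt'; apply: contra no_g => g'_u.
  by apply/hasP; exists (toQ g'); rewrite ?(LT_toQ g' Ht) // -Gt'Gt map_f.
have rL_u : rL@_u = 0.
  apply: memN_msupp_eq0; apply/negP => /bnd_L [m /lt_L lt_mu le_um].
  by have := le_tlt_trans Ht le_um lt_mu; rewrite tltxx.
have := congr1 (mcoeff u) R0; rewrite !mcoeffD !mcoeffZ mcoeffX eqxx mulr1 rL_u addr0.
rewrite mcoeff0 => /eqP; rewrite addrC addr_eq0 => /eqP F_u.
have := LT_msupp Ht nz_h; rewrite -/u -FE mcoeff_msupp mcoeff_map_mpoly F_u.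
by rewrite raddfN /= rmorphM rmorph_nat pchar_Fp_0 // mul0r oppr0 eqxx.
Qed.

End ModularLeadingTerms.

Lemma clear_denominators n (g : {mpoly rat[n]}) :
  exists2 D : rat, D != 0 & forall m, denq (D * g@_m) = 1.
Proof.
exists (\prod_(m <- msupp g) denq g@_m)%:~R.
  by rewrite intr_eq0 prodf_seq_neq0; apply/allP => m _; rewrite denq_neq0.
move=> m; have [m_g|/memN_msupp_eq0 ->] := boolP (m \in msupp g); last first.
  by rewrite mulr0; apply: (denq_int 0).
rewrite (big_rem m) //=; set x := g@_m; set P := \prod_(_ <- _) _.
have -> : (denq x * P)%:~R * x = (numq x * P)%:~R by rewrite !intrM numqE; ring.
exact: denq_int.
Qed.

Lemma scale_pint n p (g : {mpoly rat[n]}) : prime p -> g != 0 ->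
  exists2 c : rat, (forall m, (c *: g)@_m \in pint p) & pi_p p (c *: g) != 0.
Proof.
move=> pr nz_g; have [m0 m0_g] : exists m0, m0 \in msupp g.
  by move: nz_g; rewrite -msupp_eq0; case: (msupp g) => // m s _; exists m; rewrite mem_head.
have [D D0 D_int] := clear_denominators g.
pose z c m := numq (c * g@_m).
suff descent N c : c != 0 -> (forall m, denq (c * g@_m) = 1) -> (`|z c m0| < N)%N ->
    exists2 c, (forall m, (c *: g)@_m \in pint p) & pi_p p (c *: g) != 0.
  exact: descent _ D D0 D_int (ltnSn _).
elim: N c => // N IHN c c0 c_int lt_N.
have c_intE m : c * g@_m = (z c m)%:~R by rewrite numqE c_int mulr1.
have [/hasP [m1 _ p_ndvd]|/hasPn p_dvd] := boolP (has (fun m => ~~ (p %| `|z c m|)%N) (msupp g)).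
  exists c => [m|]; first by rewrite mcoeffZ c_intE pint_int.
  apply: contraNneq p_ndvd => pi0.
  by rewrite -Fp_int_eq0 // -rat_to_Fp_int // -c_intE -mcoeffZ -mcoeff_pi pi0 mcoeff0.
have p0 : p%:R != 0 :> rat by rewrite pnatr_eq0 -lt0n prime_gt0.
have z_div m : (z c m %/ p)%Z * p = z c m.
  apply: divzK; rewrite dvdzE.
  have [m_g|/memN_msupp_eq0 g_m] := boolP (m \in msupp g); first exact/negPn/p_dvd.
  by have /eqP -> : z c m == 0 by rewrite numq_eq0 g_m mulr0.
have zp_intE m : c / p%:R * g@_m = ((z c m %/ p)%Z)%:~R.
  by rewrite mulrAC c_intE -{1}(z_div m) intrM -pmulrn mulfK.
have lt_zp : (`|(z c m0 %/ p)%Z| < `|z c m0|)%N.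
  rewrite -{2}(z_div m0) abszM -[X in (X < _)%N]muln1 ltn_mul2l prime_gt1 // andbT.
  rewrite absz_gt0; apply: contraTneq m0_g => zp0.
  rewrite mcoeff_msupp negbK; have := c_intE m0; rewrite -(z_div m0) zp0 mul0r => /eqP.
  by rewrite mulf_eq0 (negbTE c0).
apply: (IHN (c / p%:R)) => [|m|]; first by rewrite mulf_neq0 ?invr_eq0.
  by rewrite zp_intE denq_int.
by rewrite /z zp_intE numq_int -ltnS (leq_trans _ lt_N).
Qed.

Section Precedence.
Variables (n : nat) (le : rel 'X_{1..n}).
Hypothesis Hle : term_ordering le.
Implicit Types (s : seq 'X_{1..n}) (o : 'X_{1..n}).

Lemma sorted_tlt_index s o j : sorted (tlt le) s -> o \in s ->
  (index o s < j < size s)%N -> tlt le o (nth 0%MM s j).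
Proof.
move=> s_sorted o_s /andP [lt_oj lt_js]; rewrite -[X in tlt le X](nth_index 0%MM o_s).
by apply: (sorted_ltn_nth (tlt_trans Hle)) => //; rewrite inE (ltn_trans lt_oj).
Qed.

Lemma sorted_le_index s o j : sorted (tlt le) s -> o \in s ->
  (j <= index o s)%N -> le (nth 0%MM s j) o.
Proof.
move=> s_sorted o_s; rewrite leq_eqVlt => /predU1P [->|lt_jo].
  by rewrite nth_index // tord_refl.
rewrite -[X in le _ X](nth_index 0%MM o_s); apply/tltW/(sorted_ltn_nth (tlt_trans Hle)) => //.
by rewrite inE (ltn_trans lt_jo) ?index_mem.
by rewrite inE index_mem.
Qed.

Lemma prec_witness Op Oq :
    sorted (tlt le) Op -> sorted (tlt le) Oq ->
    (forall o o', o \in Oq -> o' \in Oq -> o != o' -> ~~ (o <= o')%MM) ->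
    prec le Oq Op ->
  exists t, [/\ t \in Oq, forall o, o \in Op -> ~~ (o <= t)%MM &
                forall o, o \in Op -> tlt le o t -> o \in Oq].
Proof.
move=> Op_sorted Oq_sorted Oq_min.
have Oq_ndvd o t : o \in Oq -> t \in Oq -> tlt le o t -> ~~ (o <= t)%MM.
  by move=> o_Oq t_Oq lt_ot; apply: Oq_min => //; apply: contraTneq lt_ot => ->; rewrite tltxx.
case=> [[lt_size Op_pre] | [k [lt_kp lt_kq take_k lt_k]]].
  set t := nth 0%MM Oq (size Op); have t_Oq : t \in Oq by apply: mem_nth.
  have small o : o \in Op -> o \in Oq /\ tlt le o t.
    rewrite Op_pre => o_take; have o_Oq := mem_take o_take; split=> //.
    by apply: sorted_tlt_index; rewrite // -in_take // o_take lt_size.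
  by exists t; split=> // [o /small [o_Oq /(Oq_ndvd _ _ o_Oq t_Oq)] | o /small []].
set t := nth 0%MM Oq k; have t_Oq : t \in Oq by apply: mem_nth.
have small o : o \in Op -> (index o Op < k)%N -> o \in Oq /\ tlt le o t.
  move=> o_Op lt_ok; have : o \in take k Oq by rewrite -take_k in_take.
  move=> o_take; have o_Oq := mem_take o_take; split=> //.
  by apply: sorted_tlt_index; rewrite // -in_take // o_take lt_kq.
have big o : o \in Op -> (k <= index o Op)%N -> tlt le t o.
  by move=> o_Op le_ko; apply: tlt_le_trans lt_k (sorted_le_index Op_sorted o_Op le_ko).
exists t; split=> // o o_Op.
all: case: (ltnP (index o Op) k) => [/(small o o_Op) [o_Oq] | /(big o o_Op)].
- exact: Oq_ndvd.
- by rewrite (tltNge Hle); apply: contraNN; apply: tord_lepm.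
- by move=> _.
- by move=> lt_to lt_ot; have := tlt_trans Hle lt_ot lt_to; rewrite tltxx.
Qed.

End Precedence.

Section MinimalBasis.
Variables (n : nat) (le : rel 'X_{1..n}) (R : comNzRingType).
Variables (J : {mpoly R[n]} -> Prop) (O : seq 'X_{1..n}).
Hypotheses (Hle : term_ordering le) (HO : O_tuple le J O).

Lemma O_tuple_dvd_LT f : J f -> f != 0 -> exists2 o, o \in O & (o <= LT le f)%MM.
Proof.
case: HO => _ [G [[[_ G_LT] _ _ _] O_G]] J_f nz_f.
have [g g_G /andP [_ g_f]] := G_LT f J_f nz_f.
by exists (LT le g); rewrite // (perm_mem O_G) map_f.
Qed.

Lemma O_tuple_min o o' : o \in O -> o' \in O -> o != o' -> ~~ (o <= o')%MM.
Proof.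
case: HO => _ [G [[_ _ _ G_min] O_G]]; rewrite !(perm_mem O_G).
case/mapP => g g_G -> /mapP [g' g'_G ->] ne_gg'; apply: G_min => //.
by apply: contraNneq ne_gg' => ->.
Qed.

Lemma O_tuple_LT G o : groebner le J G -> o \in O -> exists2 g, g \in G & LT le g = o.
Proof.
move=> [G_J G_LT] o_O.
have [h [J_h nz_h LT_h]] : exists h, [/\ J h, h != 0 & LT le h = o].
  case: HO o_O => _ [G0 [[[G0_J _] _ G0_monic _] O_G0]].
  rewrite (perm_mem O_G0) => /mapP [h h_G0 ->]; exists h; split=> //; first exact: G0_J.
  exact/LC_neq0/G0_monic.
have [g g_G /andP [nz_g g_h]] := G_LT h J_h nz_h.
have [o' o'_O o'_g] := O_tuple_dvd_LT (G_J g g_G) nz_g.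
have o'_o : (o' <= o)%MM by rewrite -LT_h; apply: lepm_trans o'_g g_h.
have eq_o' : o' = o by apply: contraTeq o'_o; apply: O_tuple_min.
exists g => //; rewrite -LT_h; apply: (tord_anti Hle); apply: tord_lepm => //.
by rewrite LT_h -eq_o'.
Qed.

End MinimalBasis.

Lemma pi_groebner n q (sigma tau : rel 'X_{1..n}) (I : {mpoly rat[n]} -> Prop)
    (Gs Gt : seq {mpoly rat[n]}) :
    term_ordering sigma -> term_ordering tau -> is_ideal I ->
    groebner sigma I Gs -> (forall g, g \in Gs -> LC sigma g = 1) -> good q Gs ->
    groebner tau I Gt -> (forall g, g \in Gt -> LC tau g = 1) -> good q Gt ->
  groebner tau (I_mod q Gs) (map (pi_p q) Gt).
Proof.
move=> Hs Ht HI HGs Gs_monic q_good HGt Gt_monic qt_good.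
have [q_pr _] := q_good; have Gs_pint := pint_good q_good; have Gt_pint := pint_good qt_good.
split=> [_ /mapP [g g_Gt ->] | h Ih nz_h].
  apply: (pi_gen_ideal q_pr Hs HI HGs Gs_monic Gs_pint); first by case: HGt => + _; apply.
  by move=> m; apply: Gt_pint.
have [|g g_Gt g_h] := LT_gen_ideal_pi q_pr Ht HI _ Gs_pint HGt Gt_monic Gt_pint Ih nz_h.
  by case: HGs.
have [nz_pg LT_pg] := pi_LT q Ht (Gt_monic g g_Gt).
by exists (pi_p q g); rewrite ?map_f // nz_pg LT_pg.
Qed.

Lemma O_tuple_dvd_supp n p (sigma tau : rel 'X_{1..n}) (I : {mpoly rat[n]} -> Prop)
    (Gs : seq {mpoly rat[n]}) (O : seq 'X_{1..n}) f :
    term_ordering sigma -> term_ordering tau -> is_ideal I -> groebner sigma I Gs ->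
    (forall g, g \in Gs -> LC sigma g = 1) -> good p Gs -> O_tuple tau (I_mod p Gs) O ->
    I f -> f != 0 ->
  exists2 s, s \in msupp f & exists2 o, o \in O & (o <= s)%MM.
Proof.
move=> Hs Ht HI HGs Gs_monic p_good HO I_f nz_f; have [p_pr _] := p_good.
have [c c_pint nz_pcf] := scale_pint p_pr nz_f.
have I_cf : I (c *: f) by rewrite -mul_mpolyC; case: HI => _ _; apply.
have := pi_gen_ideal p_pr Hs HI HGs Gs_monic (pint_good p_good) I_cf c_pint.
move=> /(O_tuple_dvd_LT HO)/(_ nz_pcf) [o o_O o_LT].
exists (LT tau (pi_p p (c *: f))); last by exists o.
exact/msuppZ_le/msupp_pi/(LT_msupp Ht).
Qed.

Theorem corollary4p14 (n : nat) (sigma tau : rel 'X_{1..n})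
  (I : {mpoly rat[n]} -> Prop) (Gsigma Gtau : seq {mpoly rat[n]})
  (p q : nat) (Op Oq : seq 'X_{1..n}) :
  term_ordering sigma -> term_ordering tau ->
  is_ideal I -> (exists f, I f /\ f <> 0%R) ->
  reduced_groebner sigma I Gsigma ->
  reduced_groebner tau I Gtau ->
  good p Gsigma -> good q Gsigma ->
  O_tuple tau (I_mod p Gsigma) Op ->
  O_tuple tau (I_mod q Gsigma) Oq ->
  prec tau Oq Op ->
  bad q Gtau.
Proof.
move=> Hs Ht HI _ [HGs _ Gs_monic _] [HGt _ Gt_monic Gt_red] p_good q_good Op_def Oq_def.
move=> Oq_prec; have [q_pr _] := q_good; split=> //; apply: contraT => q_tgood.
have Gq := pi_groebner Hs Ht HI HGs Gs_monic q_good HGt Gt_monic (conj q_pr q_tgood).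
have [t [t_Oq Op_ndvd_t Op_below_t]] :=
  prec_witness Ht Op_def.1 Oq_def.1 (O_tuple_min Oq_def) Oq_prec.
have LT_pi g : g \in Gtau -> LT tau (pi_p q g) = LT tau g.
  by move=> g_Gt; case: (pi_LT q Ht (Gt_monic g g_Gt)).
have [_ /mapP [g g_Gt ->]] := O_tuple_LT Ht Oq_def Gq t_Oq; rewrite LT_pi // => LT_g.
have I_g : I g by case: HGt => + _; apply.
have nz_g : g != 0 by apply/LC_neq0/Gt_monic.
have [s s_g [o o_Op o_s]] := O_tuple_dvd_supp Hs Ht HI HGs Gs_monic p_good Op_def I_g nz_g.
have lt_st : tlt tau s t.
  rewrite /tlt -{1}LT_g LT_max //=; apply: contraNneq (Op_ndvd_t o o_Op) => <-.
  exact: o_s.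
have lt_ot : tlt tau o t := le_tlt_trans Ht (tord_lepm Ht o_s) lt_st.
have [_ /mapP [g' g'_Gt ->]] := O_tuple_LT Ht Oq_def Gq (Op_below_t o o_Op lt_ot).
rewrite LT_pi // => LT_g'; have [eq_gg'|ne_gg'] := eqVneq g g'.
  by move: lt_ot; rewrite -LT_g' -eq_gg' LT_g tltxx.
by move: (Gt_red g g' s g_Gt g'_Gt ne_gg' s_g); rewrite LT_g' o_s.
Qed.
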